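(* Let $F,S_0,S_1,\ldots,S_m$ be formulas. If $\emptyset[F,S_1,\ldots,S_m]=\emptyset[S_1,\ldots,S_m]$, then $\emptyset[F,S_0,S_1,\ldots,S_m]=\emptyset[S_0,S_1,\ldots,S_m]$.
   Context: Propositional models are truth assignments over a finite set of variables; a formula used where a set of models is expected stands for its set of models. A doxastic state is a sequence $[C(0),\ldots,C(k)]$ of nonempty, pairwise disjoint sets of models covering all models. The flat doxastic state $\emptyset$ is $[\text{all models}]$. Lexicographic revision: $C\,\mathrm{lex}(A) = [C(0)\cap A,\ldots,C(k)\cap A, C(0)\setminus A,\ldots,C(k)\setminus A]$, empty sets discarded. $\emptyset[T_1,\ldots,T_n]$ denotes $\emptyset$ revised lexicographically by $T_1$, then $T_2$, ..., then $T_n$. *)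

From mathcomp Require Import all_boot.
Set Implicit Arguments. Unset Strict Implicit. Unset Printing Implicit Defensive.

Inductive form (n : nat) : Type :=
| FVar of 'I_n
| FTrue
| FFalse
| FNot of form n
| FAnd of form n & form n
| FOr of form n & form n
| FImp of form n & form n.

Definition model (n : nat) := {ffun 'I_n -> bool}.

Fixpoint eval n (v : model n) (f : form n) : bool :=
  match f with
  | FVar i => v i
  | FTrue => true
  | FFalse => false
  | FNot g => ~~ eval v g
  | FAnd g h => eval v g && eval v h
  | FOr g h => eval v g || eval v h
  | FImp g h => eval v g ==> eval v h
  end.

Definition mods n (f : form n) : {set model n} := [set v | eval v f].

(* A doxastic state: sequence of nonempty, pairwise disjoint sets of models
   covering all models (ordered from most to least plausible). *)
Definition dstate n := seq {set model n}.

Definition is_dstate n (C : dstate n) : Prop :=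
  all (fun X => X != set0) C /\
  (forall i j, i < size C -> j < size C -> i != j ->
     [disjoint nth set0 C i & nth set0 C j]) /\
  (forall v : model n, exists2 X, X \in C & v \in X).

Definition flat n : dstate n := [:: [set: model n]].

Definition lex n (C : dstate n) (A : {set model n}) : dstate n :=
  [seq X <- [seq X :&: A | X <- C] ++ [seq X :\: A | X <- C] | X != set0].

Definition revise n (C : dstate n) (Ts : seq (form n)) : dstate n :=
  foldl (fun D T => lex D (mods T)) C Ts.

Definition flat_rev n (Ts : seq (form n)) : dstate n := revise (flat n) Ts.

From HB Require Import structures.
From mathcomp Require Import all_boot.

Set Implicit Arguments. Unset Strict Implicit. Unset Printing Implicit Defensive.

(* Lexicographic revisions of the flat state by T1, ..., Tk are the nonempty
   cells of the common refinement of the dichotomies {Ti, ~Ti}, listed with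
   the Tk-dichotomy as the outermost key; refinement of lists of sets is
   associative.  Hence revising by F first only subdivides each cell K of
   [S1, ..., Sm] into K/\F and K/\~F, and the hypothesis (equal numbers of
   nonempty cells) says that F splits no such K.  Inserting S0 before the
   S's only refines each K further, so F still splits none of the new cells
   and again leaves the state unchanged. *)

Section Refinement.
Variable T : finType.
Implicit Types (A K : {set T}) (C D E R : seq {set T}).

Definition refine C D : seq {set T} := [seq K :&: X | K <- D, X <- C].

Definition prune C : seq {set T} := [seq X <- C | X != set0].

Definition dichotomy A : seq {set T} := [:: A; ~: A].

Definition splits A K := (K :&: A != set0) && (K :&: ~: A != set0).

Lemma refine_cons C K D :
  refine C (K :: D) = [seq K :&: X | X <- C] ++ refine C D.
Proof. by []. Qed.

Lemma refine_cat C D1 D2 : refine C (D1 ++ D2) = refine C D1 ++ refine C D2.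
Proof. exact: allpairs_cat. Qed.

Lemma refine_map_setI C D K :
  refine C [seq K :&: Y | Y <- D] = [seq K :&: Z | Z <- refine C D].
Proof.
rewrite /refine allpairs_mapl map_allpairs.
by apply: eq_allpairs => Y X; rewrite setIA.
Qed.

Lemma refineA : associative refine.
Proof.
move=> C D; elim=> [|K E IH] //.
by rewrite !refine_cons refine_cat IH refine_map_setI.
Qed.

Lemma refine1s : left_id [:: setT] refine.
Proof. by elim=> [|K D IH] //; rewrite refine_cons IH /= setIT. Qed.

Lemma refines1 : right_id [:: setT] refine.
Proof.
move=> C; rewrite /refine /= cats0 -[RHS]map_id.
by apply: eq_map => X; rewrite setTI.
Qed.

HB.instance Definition _ := Monoid.isLaw.Build (seq {set T}) [:: setT] refine
  refineA refine1s refines1.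

Lemma prune_cat C D : prune (C ++ D) = prune C ++ prune D.
Proof. exact: filter_cat. Qed.

Lemma prune_refinel C D : prune (refine (prune C) D) = prune (refine C D).
Proof.
elim: D => [|K D IH] //; rewrite !refine_cons !prune_cat IH.
congr (_ ++ _); clear IH; elim: C => [|X C IHC] //=.
by case: eqP => [->|_] /=; rewrite ?setI0 ?eqxx IHC.
Qed.

Lemma nonempty_setI_setIC K A :
  (K :&: A != set0) + (K :&: ~: A != set0) = (K != set0) + splits A K.
Proof.
rewrite /splits -{3}(setID K A) setDE setU_eq0 negb_and.
by case: (K :&: A != set0); case: (K :&: ~: A != set0).
Qed.

Lemma size_prune_refine_dichotomy A R :
  size (prune (refine (dichotomy A) R)) = size (prune R) + count (splits A) R.
Proof.
rewrite !size_filter; elim: R => [|K R IH] //=.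
by rewrite addnA nonempty_setI_setIC IH addnACA.
Qed.

Lemma prune_refine_dichotomy_unsplit A K D : ~~ splits A K ->
  prune [seq K :&: Z | Z <- refine (dichotomy A) D] = prune [seq K :&: Z | Z <- D].
Proof.
rewrite negb_and !negbK => unsplit.
have cutK Y : prune [:: K :&: (Y :&: A); K :&: (Y :&: ~: A)] = prune [:: K :&: Y].
  rewrite !(setICA K Y) [K :&: Y]setIC /prune.
  case/orP: unsplit => /eqP KA0.
  - have -> : K :&: ~: A = K by rewrite -{2}(setID K A) KA0 set0U setDE.
    by rewrite KA0 setI0 /= eqxx.
  - have -> : K :&: A = K by rewrite -{2}(setID K A) setDE KA0 setU0.
    by rewrite KA0 setI0 /= eqxx.
elim: D => [|Y D IH] //.
by rewrite refine_cons map_cat -cat1s map_cat !prune_cat cutK IH.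
Qed.

Lemma eq_prune_refine C1 C2 R :
    {in R, forall K, prune [seq K :&: X | X <- C1] = prune [seq K :&: X | X <- C2]} ->
  prune (refine C1 R) = prune (refine C2 R).
Proof.
elim: R => [|K R IH] // eqC.
rewrite !refine_cons !prune_cat eqC ?mem_head // IH // => K' RK'.
by apply: eqC; rewrite inE RK' orbT.
Qed.

Lemma prune_refine_redundant_dichotomy A D R :
    prune (refine (dichotomy A) R) = prune R ->
  prune (refine (refine (dichotomy A) D) R) = prune (refine D R).
Proof.
move=> redundant.
have no_split : count (splits A) R = 0.
  apply/(@addnI (size (prune R))).
  by rewrite -size_prune_refine_dichotomy redundant addn0.
have /hasPn unsplit : ~~ has (splits A) R by rewrite has_count no_split.
apply: eq_prune_refine => K RK.
exact: prune_refine_dichotomy_unsplit (unsplit K RK).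
Qed.

End Refinement.

Arguments refine {T} C D.

Section Revision.
Variable n : nat.

Definition partition_of (Ts : seq (form n)) : seq {set model n} :=
  \big[refine/[:: setT]]_(f <- Ts) dichotomy (mods f).

Lemma lex_refine (C : dstate n) A : lex C A = prune (refine C (dichotomy A)).
Proof.
rewrite /lex /prune /refine /= cats0; congr (filter _ (_ ++ _));
  by apply: eq_map => X; rewrite ?setDE setIC.
Qed.

Lemma flat_rev_partition Ts : flat_rev Ts = prune (partition_of Ts).
Proof.
elim/last_ind: Ts => [|Ts f IH].
  have some_model : [set: model n] != set0 by apply/set0Pn; exists [ffun=> false].
  by rewrite /flat_rev /partition_of big_nil /prune /= some_model.
rewrite /flat_rev /revise foldl_rcons -/(revise _ _) -/(flat_rev _) IH.
by rewrite lex_refine prune_refinel /partition_of big_rcons.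
Qed.

End Revision.

Theorem mainTheorem9 (n : nat) (F S0 : form n) (Ss : seq (form n)) :
  flat_rev (F :: Ss) = flat_rev Ss ->
  flat_rev (F :: S0 :: Ss) = flat_rev (S0 :: Ss).
Proof.
rewrite !flat_rev_partition /partition_of !big_cons refineA.
exact: prune_refine_redundant_dichotomy.
Qed.
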